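(* Let $A\subseteq\Omega$ be arbitrary. Then $\mu^*(A)=0$ if and only if there exists a $\mathcal{P}$-e-process $(E_t)_{t\in\mathbb{N}_0}$ such that $\lim_{t\to\infty}E_t=\infty$ at every point of $A$.
   Context: Standing setup: $(\Omega, (\mathcal{F}_t)_{t\in\mathbb{N}_0}, \mathcal{F})$ is a filtered measurable space with $\mathcal{F} = \sigma\big(\bigcup_{t} \mathcal{F}_t\big)$. A stopping time is a map $\tau:\Omega\to\mathbb{N}_0\cup\{\infty\}$ with $\{\tau \le t\}\in\mathcal{F}_t$ for all $t$; $\mathcal{T}$ denotes the set of all stopping times. $\mathcal{P}$ is an arbitrary family of probability measures on $\mathcal{F}$. The inverse-capital measure is defined for every $A\subseteq\Omega$ by $\mu^*(A) = \inf_{\tau\in\mathcal{T}:\, A\subseteq\{\tau<\infty\}} \sup_{\mathbb{P}\in\mathcal{P}} \mathbb{P}(\tau<\infty)$. A $\mathcal{P}$-e-process is a nonnegative (possibly $[0,\infty]$-valued) process $(E_t)_{t\in\mathbb{N}_0}$ adapted to $(\mathcal{F}_t)$ such that $\mathbb{E}_{\mathbb{P}}[E_\tau]\le 1$ for every $\mathbb{P}\in\mathcal{P}$ and every $\tau\in\mathcal{T}$, with the convention $E_\infty=\limsup_{t\to\infty}E_t$. *)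

From HB Require Import structures.
From mathcomp Require Import all_boot all_order all_algebra.
From mathcomp Require Import all_classical all_reals all_analysis measurable_realfun lebesgue_integral.
Set Implicit Arguments. Unset Strict Implicit. Unset Printing Implicit Defensive.
Import Order.TTheory GRing.Theory Num.Theory.
Local Open Scope classical_set_scope.
Local Open Scope ring_scope.

Section Defs.
Context {R : realType} {d : measure_display} {T : measurableType d}.

Definition filtration (F : nat -> set (set T)) : Prop :=
  (forall t, sigma_algebra setT (F t)) /\
  (forall s t, (s <= t)%N -> F s `<=` F t).

(* Stopping times with values in N_0 \cup {oo}; [None] encodes oo. *)
Definition stopping_time (F : nat -> set (set T)) (tau : T -> option nat) : Prop :=
  forall t : nat, F t [set w | exists2 n, tau w = Some n & (n <= t)%N].

Definition finite_at (tau : T -> option nat) : set T :=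
  [set w | tau w <> None].

(* sup_{P in Ps} P(tau < oo), as a supremum inside [0, 1]
   (so the supremum over an empty family is 0). *)
Definition sup_prob (Ps : set (probability T R)) (tau : T -> option nat) : \bar R :=
  ereal_sup ([set 0%E] `|` [set (P : probability T R) (finite_at tau) | P in Ps]).

Definition mu_star (Ps : set (probability T R)) (F : nat -> set (set T))
    (A : set T) : \bar R :=
  ereal_inf [set sup_prob Ps tau |
             tau in [set tau | stopping_time F tau /\ A `<=` finite_at tau]].

Definition adapted (F : nat -> set (set T)) (E : nat -> T -> \bar R) : Prop :=
  forall (t : nat) (B : set (\bar R)), measurable B -> F t (E t @^-1` B).

Definition stopped (E : nat -> T -> \bar R) (tau : T -> option nat) (w : T) : \bar R :=
  match tau w with
  | Some n => E n w
  | None => limn_esup (fun t => E t w)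
  end.

Definition e_process (Ps : set (probability T R)) (F : nat -> set (set T))
    (E : nat -> T -> \bar R) : Prop :=
  [/\ (forall t w, (0 <= E t w)%E),
      adapted F E &
      forall P : probability T R, Ps P ->
      forall tau, stopping_time F tau ->
        (\int[P]_w stopped E tau w <= 1)%E].

End Defs.

From HB Require Import structures.
From mathcomp Require Import all_boot all_order all_algebra.
From mathcomp Require Import all_classical all_reals all_analysis measurable_realfun lebesgue_integral.
Import Order.TTheory GRing.Theory Num.Theory.
Local Open Scope classical_set_scope.
Local Open Scope ring_scope.

(* If E is an e-process diverging on A, the first time tau_c at which E
   reaches c is a stopping time with A in {tau_c < oo}, and Markov's
   inequality at tau_c gives c * P(tau_c < oo) <= E_P[E_tau_c] <= 1, so
   mu^*(A) <= 1/c for every c > 0.  Conversely, if mu^*(A) = 0, choose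
   stopping times tau_k with A in {tau_k < oo} and P(tau_k < oo) < 2^-(k+1)
   for all P; the process E_t counting the k with tau_k <= t is adapted,
   diverges on A, and every stopped value E_sigma is bounded
   by sum_k 1{tau_k < oo}, whose P-expectation is at most sum_k 2^-(k+1) = 1. *)

Local Open Scope ereal_scope.

Section InverseCapital.
Context {R : realType} {d : measure_display} {T : measurableType d}.
Implicit Types (F : nat -> set (set T)) (Ps : set (probability T R))
  (E : nat -> T -> \bar R) (tau : T -> option nat).

(* No measurability is needed: the integral of a nonnegative function is the
   supremum of the integrals of the simple functions below it. *)
Lemma ge0_le_integralT (mu : {measure set T -> \bar R}) (f g : T -> \bar R) :
  (forall x, 0 <= f x) -> (forall x, 0 <= g x) -> (forall x, f x <= g x) ->
  \int[mu]_x f x <= \int[mu]_x g x.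
Proof.
move=> f0 g0 fg; rewrite !ge0_integralTE//.
apply: ereal_sup_le => _ [h hf <-]; exists h => //= x.
exact: le_trans (hf x) (fg x).
Qed.

Lemma stopped_ge0 E tau w : (forall t, 0 <= E t w) -> 0 <= stopped E tau w.
Proof.
move=> E0; rewrite /stopped; case: (tau w) => [n|]; first exact: E0.
rewrite limn_esup_lim.
apply: lime_ge; first exact: is_cvg_esups.
apply: nearW => n; apply: le_trans (E0 n) _.
by apply: ereal_sup_ubound; exists n => /=.
Qed.

Lemma stopped_le E tau w (M : \bar R) :
  (forall t, E t w <= M) -> stopped E tau w <= M.
Proof.
move=> EM; rewrite /stopped; case: (tau w) => [n|]; first exact: EM.
rewrite limn_esup_lim.
apply: lime_le; first exact: is_cvg_esups.
by apply: nearW => n; apply/ereal_supP => _ [m _ <-].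
Qed.

Definition event_le tau (t : nat) : set T :=
  [set w | exists2 n, tau w = Some n & (n <= t)%N].

Lemma finite_atE tau : finite_at tau = \bigcup_t event_le tau t.
Proof.
apply/seteqP; split => w; rewrite /finite_at /=.
  by case Ew: (tau w) => [n|//] _; exists n => //; exists n.
by move=> [t _ [n -> _]].
Qed.

Lemma measurable_finite_at {F tau} :
  measurable = <<s \bigcup_t F t >> -> stopping_time F tau ->
  measurable (finite_at tau).
Proof.
move=> mE st; rewrite finite_atE; apply: bigcupT_measurable => t.
by rewrite mE; apply: sub_sigma_algebra; exists t => //; exact: st.
Qed.

Lemma sup_prob_ge0 Ps tau : 0 <= sup_prob Ps tau.
Proof. by apply: ereal_sup_ubound; left. Qed.

Lemma le_sup_prob Ps tau (P : probability T R) :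
  Ps P -> P (finite_at tau) <= sup_prob Ps tau.
Proof. by move=> PP; apply: ereal_sup_ubound; right; exists P. Qed.

Lemma sup_prob_le Ps tau (x : \bar R) : 0 <= x ->
  (forall P : probability T R, Ps P -> P (finite_at tau) <= x) ->
  sup_prob Ps tau <= x.
Proof. by move=> x0 Px; apply/ereal_supP => _ [->|[P PP <-]] //; exact: Px. Qed.

Section HittingTime.
Variables (E : nat -> T -> \bar R) (c : \bar R).

Definition hitting_time (w : T) : option nat :=
  match pselect (exists t, c <= E t w) with
  | left h => Some (ex_minn h)
  | right _ => None
  end.

Lemma hitting_timeP {w n} : hitting_time w = Some n ->
  c <= E n w /\ forall m, c <= E m w -> (n <= m)%N.
Proof.
rewrite /hitting_time; case: pselect => [h|//].
by case: ex_minnP => m cm minm [<-]; split => // k /minm.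
Qed.

Lemma hitting_time_None w : hitting_time w = None -> forall t, E t w < c.
Proof.
rewrite /hitting_time; case: pselect => [//|nh] _ t.
by rewrite ltNge; apply/negP => ct; apply: nh; exists t.
Qed.

Lemma event_le_hitting_time t :
  event_le hitting_time t = \bigcup_(n in [set n | (n <= t)%N]) E n @^-1` `[c, +oo[.
Proof.
apply/seteqP; split => w /=.
  move=> [n /hitting_timeP[cn _] nt]; exists n => //=.
  by rewrite in_itv /= andbT.
move=> [n /= nt]; rewrite in_itv /= andbT => cn.
case Ew: (hitting_time w) => [m|]; last by move: cn; rewrite leNgt hitting_time_None.
by exists m => //; exact: leq_trans ((hitting_timeP Ew).2 n cn) nt.
Qed.

Lemma hitting_time_stopping {F} :
  filtration F -> adapted F E -> stopping_time F hitting_time.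
Proof.
move=> [salg Fmono] adE t; rewrite /stopping_time -/(event_le _ t).
rewrite event_le_hitting_time bigcup_mkcond.
have [_ _ SU] := salg t; apply: SU => n; case: ifPn => [/[!inE] nt|_].
  by apply: (Fmono n t nt); apply: adE; exact: emeasurable_itv.
by have [] := salg t.
Qed.

Lemma hitting_time_indic_le w :
  (forall t, 0 <= E t w) ->
  c * (\1_(finite_at hitting_time) w)%:E <= stopped E hitting_time w.
Proof.
move=> E0; rewrite indicE; case: (boolP (w \in _)) => [|_].
  rewrite inE /finite_at /stopped /=; case Ew: (hitting_time w) => [n|//] _.
  by rewrite mule1; exact: (hitting_timeP Ew).1.
by rewrite mule0; exact: stopped_ge0.
Qed.

End HittingTime.

Lemma e_process_hitting_bound {F Ps E} {c : R} {P : probability T R} :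
  filtration F -> measurable = <<s \bigcup_t F t >> ->
  e_process Ps F E -> Ps P -> (0 < c)%R ->
  c%:E * P (finite_at (hitting_time E c%:E)) <= 1.
Proof.
move=> fF mE [E0 adE intE] PP c0.
set tau := hitting_time E c%:E.
have st : stopping_time F tau := hitting_time_stopping E c%:E fF adE.
have mtau := measurable_finite_at mE st.
apply: le_trans (intE P PP _ st).
rewrite -[finite_at _]setIT -integral_indic //.
rewrite -(integralZl_indic _ (fun=> finite_at tau)) //; last first.
  by move=> /(lt_trans c0); rewrite ltxx.
apply: ge0_le_integralT => w.
- by rewrite lee_fin mulr_ge0 ?(ltW c0).
- exact: stopped_ge0.
- by rewrite EFinM; exact: hitting_time_indic_le.
Qed.

Lemma mu_star_eq0_of_e_process F Ps E (A : set T) :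
  filtration F -> measurable = <<s \bigcup_t F t >> ->
  e_process Ps F E -> (forall w, A w -> (fun t => E t w) @ \oo --> +oo) ->
  mu_star Ps F A = 0.
Proof.
move=> fF mE eE EA; apply/eqP; rewrite eq_le; apply/andP; split; last first.
  by apply: le_ereal_inf_tmp => _ [tau _ <-]; exact: sup_prob_ge0.
apply/lee_addgt0Pr => e e0; rewrite add0e.
have ie0 : (0 < e^-1)%R by rewrite invr_gt0.
pose tau := hitting_time E (e^-1)%:E.
apply: ge_ereal_inf; exists (sup_prob Ps tau).
  exists tau => //; split; first by case: eE => _ adE _; exact: hitting_time_stopping.
  move=> w /EA /cvgeyPge/(_ e^-1%R)[N _ /(_ N (leqnn N)) /= cN] tauN.
  by move: cN; rewrite leNgt hitting_time_None.
apply: sup_prob_le => [|P PP]; first by rewrite lee_fin ltW.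
have := e_process_hitting_bound fF mE eE PP ie0.
by rewrite -(@lee_pmul2l _ e%:E) ?lte_fin // muleA -EFinM divff ?gt_eqF // mul1e mule1.
Qed.

Section CountingProcess.
Variable taus : nat -> T -> option nat.

Definition count_hits (t : nat) (w : T) : \bar R :=
  \sum_(k <oo) (\1_(event_le (taus k) t) w : R)%:E.

Definition count_finite (w : T) : \bar R :=
  \sum_(k <oo) (\1_(finite_at (taus k)) w : R)%:E.

Lemma count_hits_ge0 t w : 0 <= count_hits t w.
Proof. by apply: nneseries_ge0 => k _ _; rewrite lee_fin. Qed.

Lemma count_finite_ge0 w : 0 <= count_finite w.
Proof. by apply: nneseries_ge0 => k _ _; rewrite lee_fin. Qed.

Lemma count_hits_le_count_finite t w : count_hits t w <= count_finite w.
Proof.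
apply: lee_nneseries => [k _ _|k _]; first by rewrite lee_fin.
rewrite lee_fin !indicE; case: (boolP (w \in _)) => //.
by rewrite inE => -[n tn _]; rewrite mem_set // /finite_at /= tn.
Qed.

Lemma adapted_count_hits F : filtration F ->
  (forall k, stopping_time F (taus k)) -> adapted F count_hits.
Proof.
move=> [salg _] st t B mB.
pose U := g_sigma_algebraType (F t).
have mcount : measurable_fun (setT : set U) (count_hits t : U -> \bar R).
  apply: ge0_emeasurable_sum => [k x _ _|k _]; first by rewrite lee_fin.
  apply/measurable_EFinP; apply: measurable_indic.
  exact: sub_sigma_algebra (st k t).
by rewrite -(sigma_algebra_id (salg t)) -[_ @^-1` B]setTI; exact: mcount.
Qed.

Lemma count_hits_cvgey w : (forall k, finite_at (taus k) w) ->
  (fun t => count_hits t w) @ \oo --> +oo.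
Proof.
move=> fin; apply/cvgeyPge => M.
have partial m : exists N, forall t, (N <= t)%N ->
    (m%:R)%:E <= \sum_(0 <= k < m) (\1_(event_le (taus k) t) w : R)%:E.
  elim: m => [|m [N HN]]; first by exists 0%N => t _; rewrite big_geq.
  have := fin m; rewrite /finite_at /=; case Hm: (taus m w) => [n|//] _.
  exists (maxn N n) => t; rewrite geq_max => /andP[Nt nt].
  rewrite big_nat_recr //= -natr1 EFinD; apply: leeD; first exact: HN.
  by rewrite indicE mem_set //; exists n.
have [N HN] := partial (Num.truncn M).+1.
exists N => // t /= /HN Nt.
apply: le_trans (le_trans _ Nt) _.
  by rewrite lee_fin ltW // truncnS_gt.
by apply: nneseries_lim_ge => k _ _; rewrite lee_fin.
Qed.

Lemma integral_count_finite {F} (P : probability T R) :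
  measurable = <<s \bigcup_t F t >> -> (forall k, stopping_time F (taus k)) ->
  \int[P]_w count_finite w = \sum_(k <oo) P (finite_at (taus k)).
Proof.
move=> mE st; have mfin k := measurable_finite_at mE (st k).
rewrite /count_finite integral_nneseries //; last first.
  by move=> k; apply/measurable_EFinP; exact: measurable_indic.
by apply: eq_eseriesr => k _; rewrite integral_indic ?setIT.
Qed.

Lemma e_process_count_hits F Ps :
  filtration F -> measurable = <<s \bigcup_t F t >> ->
  (forall k, stopping_time F (taus k)) ->
  (forall k, sup_prob Ps (taus k) <= (1 / (2 ^ (k + 1))%:R)%:E) ->
  e_process Ps F count_hits.
Proof.
move=> fF mE st small; split; [exact: count_hits_ge0 | exact: adapted_count_hits |].
move=> P PP sigma _.
apply: le_trans (_ : \int[P]_w count_finite w <= 1).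
  apply: ge0_le_integralT => w.
  - by apply: stopped_ge0 => t; exact: count_hits_ge0.
  - exact: count_finite_ge0.
  - by apply: stopped_le => t; exact: count_hits_le_count_finite.
rewrite (integral_count_finite P mE st).
apply: le_trans (lee_nneseries (v := fun k => (1 / (2 ^ (k + 1))%:R)%:E) _ _) _.
- by move=> k _ _; exact: measure_ge0.
- by move=> k _; apply: le_trans (small k); exact: le_sup_prob.
have -> // : \sum_(k <oo) ((1 / (2 ^ (k + 1))%:R)%:E : \bar R) = 1.
apply/cvg_lim => //; have := @cvg_geometric_eseries_half R 1 0.
by rewrite expr0 divr1.
Qed.

End CountingProcess.

Lemma mu_star_eq0_stopping_time {F Ps} {A : set T} :
  mu_star Ps F A = 0 -> forall eps : R, (0 < eps)%R ->
  exists tau, (stopping_time F tau /\ A `<=` finite_at tau) /\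
    sup_prob Ps tau <= eps%:E.
Proof.
move=> mu0 eps eps0; have : mu_star Ps F A < eps%:E by rewrite mu0 lte_fin.
by move=> /ereal_inf_lt[_ [tau Htau <-] /ltW lt]; exists tau.
Qed.

End InverseCapital.

Theorem mainTheorem3 (R : realType) (d : measure_display) (T : measurableType d)
    (F : nat -> set (set T)) (Ps : set (probability T R)) (A : set T) :
  filtration F ->
  (@measurable d T) = <<s \bigcup_t F t >> ->
  (mu_star Ps F A = 0%E <->
   exists E : nat -> T -> \bar R,
     e_process Ps F E /\
     forall w, A w -> (fun t => E t w) @ \oo --> +oo%E).
Proof.
move=> fF mE; split; last by move=> [E [eE EA]]; exact: mu_star_eq0_of_e_process eE EA.
move=> mu0.
have half_pow_gt0 k : (0 < 1 / (2 ^ (k + 1))%:R :> R)%R.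
  by rewrite divr_gt0 // ltr0n expn_gt0.
have /choice[taus Htaus] k := mu_star_eq0_stopping_time mu0 _ (half_pow_gt0 k).
exists (count_hits taus); split.
  apply: e_process_count_hits => // k; [exact: (Htaus k).1.1 | exact: (Htaus k).2].
by move=> w Aw; apply: count_hits_cvgey => k; exact: (Htaus k).1.2.
Qed.
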